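(* Let $m\in\mathbb Z\setminus\{0\}$ and $\xi\in\mathbb Z_m$. The assignment $a\mapsto a$, $b\mapsto e_0$ extends to a group isomorphism $f:\overline{BS}(m,\xi)\to\widetilde{BS}(m,\xi)$. Its inverse is determined by $f^{-1}(a)=a$ and $f^{-1}(e_i)=b_i$ for every $i\ge 0$, where $b_0=b$, $b_1=ab^ma^{-1}$ and $b_i=ab_{i-1}b^{-r_{i-1}(\xi)}a^{-1}$ for $i\ge 2$.
   Context: For $p,q\in\mathbb Z\setminus\{0\}$, $BS(p,q)=\langle a,b\mid ab^pa^{-1}=b^q\rangle$, marked by $(a,b)$. The space of marked groups on two generators $\mathcal G_2$ is the set of normal subgroups $N$ of the free group $\mathbb F(a,b)$ (a marked group $(G,(s_1,s_2))$ corresponds to the kernel of $\mathbb F(a,b)\to G$, $a\mapsto s_1,b\mapsto s_2$), with the ultrametric $d(N_1,N_2)=e^{-\lambda}$ for $N_1\neq N_2$, where $\lambda$ is the minimal word length of an element of $N_1\triangle N_2$. For $m\in\mathbb Z\setminus\{0\}$, $\mathbb Z_m=\varprojlim \mathbb Z/m^h\mathbb Z$ is the ring of $m$-adic integers, with the $m$-adic topology. For $\xi\in\mathbb Z_m$, $\overline{BS}(m,\xi)$ denotes the limit in $\mathcal G_2$ of $BS(m,\xi_n)$ for any sequence of integers $(\xi_n)$ with $|\xi_n|\to\infty$ and $\xi_n\to\xi$ in $\mathbb Z_m$ (this limit exists and is independent of the chosen sequence); it is marked by the images of $a,b$. The functions $r_i$: for $\xi\in\mathbb Z_m$ put $r_0(\xi)=0$,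 $s_0(\xi)=1$ and, for $i\ge1$, let $r_i(\xi)\in\{0,\dots,|m|-1\}$ and $s_i(\xi)\in\mathbb Z_m$ be the unique elements with $\xi\, s_{i-1}(\xi)=m\,s_i(\xi)+r_i(\xi)$. The group $\widetilde{BS}(m,\xi)$: let $E$ be the free abelian group with basis $e_0,e_1,e_2,\dots$ (written additively), $E_{m,\xi}\le E$ the subgroup with basis $me_0,\ e_1-r_1(\xi)e_0,\ e_2-r_2(\xi)e_0,\dots$, and $E_1\le E$ the subgroup with basis $e_1,e_2,\dots$. Let $\phi:E_{m,\xi}\to E_1$ be the isomorphism with $\phi(me_0)=e_1$ and $\phi(e_i-r_i(\xi)e_0)=e_{i+1}$ for $i\ge1$. Then $\widetilde{BS}(m,\xi)$ is the HNN extension $\langle E,a\mid a x a^{-1}=\phi(x)\ \forall x\in E_{m,\xi}\rangle$. *)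

(* Groups are handled via words in the free group and
   normal subgroups (kernels) as predicates on words. *)
From Stdlib Require Import ZArith List Arith.
Import ListNotations.
Open Scope Z_scope.

(* a letter is a generator together with an "inverse" flag (true = inverse) *)
Definition letter (X : Type) := (X * bool)%type.
Definition word (X : Type) := list (letter X).

Definition inv_letter {X} (l : letter X) : letter X := (fst l, negb (snd l)).
Definition inv_word {X} (w : word X) : word X := rev (map inv_letter w).

Definition gen {X} (x : X) : word X := [(x, false)].

Definition wrep {X} (w : word X) (n : nat) : word X := concat (repeat w n).
Definition wpow {X} (w : word X) (k : Z) : word X :=
  if (0 <=? k) then wrep w (Z.to_nat k) else wrep (inv_word w) (Z.to_nat (- k)).

Definition subst {X Y} (f : X -> word Y) (w : word X) : word Y :=
  flat_map (fun l : letter X => if snd l then inv_word (f (fst l)) else f (fst l)) w.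

(** * Presented groups: <X | R>; weq R is the congruence on words whose
    quotient is the group, and pres_ker R its kernel (normal closure of R). *)
Inductive weq {X} (R : word X -> Prop) : word X -> word X -> Prop :=
| weq_refl u : weq R u u
| weq_sym u v : weq R u v -> weq R v u
| weq_trans u v w : weq R u v -> weq R v w -> weq R u w
| weq_app u u' v v' : weq R u u' -> weq R v v' -> weq R (u ++ v) (u' ++ v')
| weq_cancel x : weq R [x; inv_letter x] []
| weq_rel r : R r -> weq R r [].

Definition pres_ker {X} (R : word X -> Prop) (w : word X) : Prop := weq R w [].

Inductive gen2 := ga | gb.
Inductive genT := tA | tE (i : nat).

(** * Baumslag-Solitar groups BS(p,q) = <a,b | a b^p a^-1 = b^q>, as the
    normal subgroup N of F(a,b) (kernel of the marking). *)
Definition BS_rel (p q : Z) (w : word gen2) : Prop :=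
  w = gen ga ++ wpow (gen gb) p ++ inv_word (gen ga) ++ inv_word (wpow (gen gb) q).
Definition BS_ker (p q : Z) : word gen2 -> Prop := pres_ker (BS_rel p q).

(** * Convergence in the space of marked groups G_2:
    d(N_n, N) -> 0 iff for every L, eventually N_n and N agree on all
    elements of word length <= L. *)
Definition marked_conv (Ns : nat -> word gen2 -> Prop) (N : word gen2 -> Prop) : Prop :=
  forall L : nat, exists n0 : nat, forall n : nat, (n0 <= n)%nat ->
    forall w : word gen2, (length w <= L)%nat -> (Ns n w <-> N w).

(** * m-adic integers Z_m = lim Z/m^h Z: an element is represented by a
    compatible sequence of integers x h (representing a class mod m^h). *)
Definition zm_elem (m : Z) (x : nat -> Z) : Prop :=
  forall h : nat, (m ^ Z.of_nat h | x (S h) - x h).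
Definition zm_eq (m : Z) (x y : nat -> Z) : Prop :=
  forall h : nat, (m ^ Z.of_nat h | x h - y h).
Definition zm_conv (m : Z) (xs : nat -> Z) (x : nat -> Z) : Prop :=
  forall h : nat, exists n0 : nat, forall n : nat, (n0 <= n)%nat ->
    (m ^ Z.of_nat h | xs n - x h).
Definition tends_to_infty (xs : nat -> Z) : Prop :=
  forall B : Z, exists n0 : nat, forall n : nat, (n0 <= n)%nat -> B <= Z.abs (xs n).

Definition rs_spec (m : Z) (xi : nat -> Z) (r : nat -> Z) (s : nat -> nat -> Z) : Prop :=
  r O = 0 /\ zm_eq m (s O) (fun _ => 1) /\
  forall i : nat, 0 <= r (S i) < Z.abs m /\ zm_elem m (s (S i)) /\
    zm_eq m (fun h => xi h * s i h) (fun h => m * s (S i) h + r (S i)).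

(** * The HNN extension BS~(m,xi) = < E, a | a x a^-1 = phi(x), x in E_{m,xi} >,
    presented with generators a, e_0, e_1, ...: relators making E free abelian
    on the e_i, and a y a^-1 = phi(y) for y ranging over the basis of E_{m,xi}
    (me_0 |-> e_1, e_i - r_i e_0 |-> e_(i+1) for i >= 1). *)
Definition tBS_rel (m : Z) (r : nat -> Z) (w : word genT) : Prop :=
  (exists i j : nat, w = gen (tE i) ++ gen (tE j) ++ inv_word (gen (tE i)) ++ inv_word (gen (tE j)))
  \/ w = gen tA ++ wpow (gen (tE O)) m ++ inv_word (gen tA) ++ inv_word (gen (tE 1%nat))
  \/ (exists i : nat, (1 <= i)%nat /\
        w = gen tA ++ gen (tE i) ++ wpow (gen (tE O)) (- r i) ++ inv_word (gen tA)
            ++ inv_word (gen (tE (S i)))).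
Definition tBS_ker (m : Z) (r : nat -> Z) : word genT -> Prop := pres_ker (tBS_rel m r).

Definition f_gen (g : gen2) : word genT :=
  match g with ga => gen tA | gb => gen (tE O) end.

Fixpoint bword (m : Z) (r : nat -> Z) (i : nat) : word gen2 :=
  match i with
  | O => gen gb
  | S O => gen ga ++ wpow (gen gb) m ++ inv_word (gen ga)
  | S j => gen ga ++ bword m r j ++ wpow (gen gb) (- r j) ++ inv_word (gen ga)
  end.

Definition g_gen (m : Z) (r : nat -> Z) (t : genT) : word gen2 :=
  match t with tA => gen ga | tE i => bword m r i end.

(** Marked-group quotients F(X)/K1 and F(Y)/K2 (K1, K2 kernels given as
    predicates on words); the assignments fg, gg on generators extend to
    homomorphisms which are mutually inverse isomorphisms. *)
Definition inverse_isos {X Y} (K1 : word X -> Prop) (K2 : word Y -> Prop)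
    (fg : X -> word Y) (gg : Y -> word X) : Prop :=
  (forall w, K1 w -> K2 (subst fg w)) /\
  (forall w, K2 w -> K1 (subst gg w)) /\
  (forall w, K1 (subst gg (subst fg w) ++ inv_word w)) /\
  (forall w, K2 (subst fg (subst gg w) ++ inv_word w)).

(* The assignment g : a |-> a, e_i |-> b_i kills the relators of BS~(m, xi) in
   BS(m, q) as soon as q is m-adically close to xi: there b_i = b^(q s_(i-1))
   for integers s_i obeying m s_i = q s_(i-1) - r_i up to the needed depth, so
   g induces a homomorphism into the limit group.  Conversely, a word of the
   limit group is trivial in BS(m, q) for some q that is both m-adically close
   to xi and of large absolute value.  Its image under f reduces by pinches
   (a v a^-1 -> phi v, a^-1 v a -> phi^-1 v) to a pinch-free word of BS~;
   sending e_i to b^(q s_(i-1)) carries this reduction to one in BS(m, q), and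
   for |q| large the image stays pinch-free.  Britton's lemma in BS(m, q),
   proved with the van der Waerden action on normal forms, then leaves no
   letter a, and the remaining vector of E maps to the trivial power of b;
   for |q| large this map is injective on the vectors that occur, so the image
   under f was trivial.  Finally g o f is the identity on words and f o g
   fixes the generators of BS~. *)

From Stdlib Require Import ZArith List Arith Lia Setoid Morphisms.
Import ListNotations.
Open Scope Z_scope.

(** * Words modulo relations *)

Section Words.
Context {X : Type}.
Implicit Types (u v w : word X) (R : word X -> Prop).

Lemma inv_letter_involutive (l : letter X) : inv_letter (inv_letter l) = l.
Proof. destruct l; unfold inv_letter; simpl; rewrite Bool.negb_involutive; reflexivity. Qed.

Lemma inv_word_app u v : inv_word (u ++ v) = inv_word v ++ inv_word u.
Proof. unfold inv_word; rewrite map_app, rev_app_distr; reflexivity. Qed.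

Lemma inv_word_involutive u : inv_word (inv_word u) = u.
Proof.
  unfold inv_word. rewrite map_rev, rev_involutive, map_map.
  induction u; simpl; auto. rewrite inv_letter_involutive, IHu. reflexivity.
Qed.

#[global] Instance weq_Equivalence R : Equivalence (weq R).
Proof. split; [intro; apply weq_refl | intros ??; apply weq_sym | intros ???; apply weq_trans]. Qed.

#[global] Instance app_weq_Proper R : Proper (weq R ==> weq R ==> weq R) (@app (letter X)).
Proof. intros u u' H v v' H'. apply weq_app; auto. Qed.

#[global] Instance cons_weq_Proper R (x : letter X) : Proper (weq R ==> weq R) (cons x).
Proof. intros u u' H. change (weq R ([x] ++ u) ([x] ++ u')). rewrite H. reflexivity. Qed.

Lemma weq_app_inv_r R u : weq R (u ++ inv_word u) [].
Proof.
  induction u as [|x u IH]; simpl. reflexivity.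
  change (inv_word (x :: u)) with (inv_word u ++ [inv_letter x]).
  rewrite app_assoc.
  change (x :: (u ++ inv_word u) ++ [inv_letter x]) with ([x] ++ (u ++ inv_word u) ++ [inv_letter x]).
  rewrite IH. apply weq_cancel.
Qed.

Lemma weq_app_inv_l R u : weq R (inv_word u ++ u) [].
Proof. rewrite <- (inv_word_involutive u) at 2. apply weq_app_inv_r. Qed.

#[global] Instance inv_word_weq_Proper R : Proper (weq R ==> weq R) (@inv_word X).
Proof.
  intros u v H. transitivity (inv_word u ++ (v ++ inv_word v)).
  - rewrite weq_app_inv_r, app_nil_r. reflexivity.
  - transitivity (inv_word u ++ (u ++ inv_word v)).
    + apply weq_app; [reflexivity|]. apply weq_app; [symmetry; exact H | reflexivity].
    + rewrite app_assoc, weq_app_inv_l. reflexivity.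
Qed.

Lemma weq_inv_app_cancel R u w : weq R (inv_word u ++ u ++ w) w.
Proof. rewrite app_assoc, weq_app_inv_l. reflexivity. Qed.

Lemma weq_of_app_inv_nil R u v : weq R (u ++ inv_word v) [] -> weq R u v.
Proof.
  intro H. transitivity ((u ++ inv_word v) ++ v).
  - rewrite <- app_assoc, weq_app_inv_l, app_nil_r. reflexivity.
  - rewrite H. reflexivity.
Qed.

Lemma wrep_succ_r u n : wrep u (S n) = wrep u n ++ u.
Proof.
  unfold wrep. induction n; simpl in *. rewrite app_nil_r; reflexivity.
  rewrite <- app_assoc. f_equal. exact IHn.
Qed.

Lemma inv_word_wrep u n : inv_word (wrep u n) = wrep (inv_word u) n.
Proof.
  induction n. reflexivity.
  change (wrep u (S n)) with (u ++ wrep u n).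
  rewrite inv_word_app, IHn, <- wrep_succ_r. reflexivity.
Qed.

Lemma wpow_opp u k : wpow u (- k) = inv_word (wpow u k).
Proof.
  unfold wpow. destruct k as [|p|p]; simpl.
  - reflexivity.
  - rewrite inv_word_wrep. reflexivity.
  - rewrite inv_word_wrep, inv_word_involutive. reflexivity.
Qed.

Lemma wpow_1 u : wpow u 1 = u.
Proof. unfold wpow, wrep; simpl. apply app_nil_r. Qed.

Lemma wpow_of_nat u (n : nat) : wpow u (Z.of_nat n) = wrep u n.
Proof.
  unfold wpow. destruct (0 <=? Z.of_nat n) eqn:E.
  - rewrite Nat2Z.id; reflexivity.
  - apply Z.leb_gt in E; lia.
Qed.

Lemma wpow_succ R u k : weq R (wpow u (k + 1)) (wpow u k ++ u).
Proof.
  destruct (Z_le_gt_dec 0 k).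
  - replace k with (Z.of_nat (Z.to_nat k)) by lia.
    replace (Z.of_nat (Z.to_nat k) + 1) with (Z.of_nat (S (Z.to_nat k))) by lia.
    rewrite !wpow_of_nat, wrep_succ_r. reflexivity.
  - destruct (Z.to_nat (- k - 1)) as [|n] eqn:En.
    + replace k with (-1) by lia. unfold wpow, wrep; simpl.
      rewrite app_nil_r. symmetry. apply weq_app_inv_l.
    + replace (k + 1) with (- Z.of_nat (S n)) by lia.
      replace k with (- Z.of_nat (S (S n))) by lia.
      rewrite !wpow_opp, !wpow_of_nat. change (wrep u (S (S n))) with (u ++ wrep u (S n)).
      rewrite inv_word_app, <- app_assoc, weq_app_inv_l, app_nil_r. reflexivity.
Qed.

Lemma wpow_pred R u k : weq R (wpow u (k - 1)) (wpow u k ++ inv_word u).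
Proof.
  replace k with ((k - 1) + 1) at 2 by lia.
  rewrite wpow_succ, <- app_assoc, weq_app_inv_r, app_nil_r. reflexivity.
Qed.

Lemma wpow_add R u a b : weq R (wpow u a ++ wpow u b) (wpow u (a + b)).
Proof.
  revert a. induction b using Z.peano_ind; intro a.
  - rewrite app_nil_r, Z.add_0_r. reflexivity.
  - rewrite <- Z.add_1_r, wpow_succ, app_assoc, IHb, Z.add_assoc, wpow_succ. reflexivity.
  - rewrite <- Z.sub_1_r, wpow_pred, app_assoc, IHb, Z.add_sub_assoc, wpow_pred. reflexivity.
Qed.

#[global] Instance wpow_weq_Proper R : Proper (weq R ==> eq ==> weq R) (@wpow X).
Proof.
  intros u v H k k' <-. induction k using Z.peano_ind.
  - reflexivity.
  - rewrite <- Z.add_1_r, !wpow_succ, IHk, H. reflexivity.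
  - rewrite <- Z.sub_1_r, !wpow_pred, IHk, H. reflexivity.
Qed.

Lemma wpow_mul R u a b : weq R (wpow (wpow u a) b) (wpow u (a * b)).
Proof.
  induction b using Z.peano_ind.
  - rewrite Z.mul_0_r. reflexivity.
  - rewrite <- Z.add_1_r, wpow_succ, IHb, wpow_add. f_equiv; lia.
  - rewrite <- Z.sub_1_r, wpow_pred, IHb, <- wpow_opp, wpow_add. f_equiv; lia.
Qed.

Definition comm R u v : Prop := weq R (u ++ v) (v ++ u).

#[global] Instance comm_weq_Proper R : Proper (weq R ==> weq R ==> iff) (comm R).
Proof. intros u u' H v v' H'. unfold comm. rewrite H, H'. reflexivity. Qed.

Lemma comm_sym R u v : comm R u v -> comm R v u.
Proof. unfold comm; intros; symmetry; auto. Qed.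

Lemma comm_nil_r R u : comm R u [].
Proof. unfold comm; rewrite app_nil_r; reflexivity. Qed.

Lemma comm_app_r R u v w : comm R u v -> comm R u w -> comm R u (v ++ w).
Proof. unfold comm; intros H1 H2. rewrite app_assoc, H1, <- app_assoc, H2, app_assoc. reflexivity. Qed.

Lemma comm_inv_r R u v : comm R u v -> comm R u (inv_word v).
Proof.
  unfold comm; intro H. transitivity (inv_word v ++ (v ++ u) ++ inv_word v).
  - rewrite !app_assoc, weq_app_inv_l. reflexivity.
  - rewrite <- H, <- !app_assoc, weq_app_inv_r, app_nil_r. reflexivity.
Qed.

Lemma comm_wpow_r R u v k : comm R u v -> comm R u (wpow v k).
Proof.
  intro H. assert (Hrep : forall v n, comm R u v -> comm R u (wrep v n)).
  { intros v' n Hv. induction n; [apply comm_nil_r | apply comm_app_r; auto]. }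
  unfold wpow. destruct (0 <=? k); auto.
  rewrite <- inv_word_wrep. apply comm_inv_r, Hrep, H.
Qed.

Lemma wpow_app_of_comm R u v k : comm R u v ->
  weq R (wpow (u ++ v) k) (wpow u k ++ wpow v k).
Proof.
  intro H. induction k using Z.peano_ind.
  - reflexivity.
  - rewrite <- Z.add_1_r, !wpow_succ, IHk.
    assert (Hc : comm R (wpow v k) u) by (apply comm_sym, comm_wpow_r; auto).
    rewrite <- !app_assoc. f_equiv. rewrite !app_assoc. f_equiv. apply Hc.
  - rewrite <- Z.sub_1_r, !wpow_pred, IHk, inv_word_app.
    assert (Hc : comm R (wpow v k ++ inv_word v) (inv_word u)).
    { apply comm_inv_r, comm_sym, comm_app_r; [apply comm_wpow_r | apply comm_inv_r]; auto. }
    rewrite <- !app_assoc. f_equiv. rewrite app_assoc. apply Hc.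
Qed.

Definition conj (g u : word X) : word X := g ++ u ++ inv_word g.

Lemma conj_app R g u v : weq R (conj g (u ++ v)) (conj g u ++ conj g v).
Proof. unfold conj. rewrite <- !app_assoc, weq_inv_app_cancel. reflexivity. Qed.

Lemma conj_inv_word g u : conj g (inv_word u) = inv_word (conj g u).
Proof. unfold conj. rewrite !inv_word_app, inv_word_involutive, app_assoc. reflexivity. Qed.

Lemma conj_nil R g : weq R (conj g []) [].
Proof. apply weq_app_inv_r. Qed.

Lemma conj_wpow R g u k : weq R (conj g (wpow u k)) (wpow (conj g u) k).
Proof.
  assert (Hrep : forall v n, weq R (conj g (wrep v n)) (wrep (conj g v) n)).
  { intros v n. induction n; [apply conj_nil|].
    change (wrep ?x (S n)) with (x ++ wrep x n). rewrite conj_app, IHn. reflexivity. }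
  unfold wpow. destruct (0 <=? k); auto.
  rewrite <- !inv_word_wrep, conj_inv_word, Hrep. reflexivity.
Qed.

#[global] Instance conj_weq_Proper R g : Proper (weq R ==> weq R) (conj g).
Proof. intros u v H. unfold conj. rewrite H. reflexivity. Qed.

Lemma comm_conj R g u v : comm R u v -> comm R (conj g u) (conj g v).
Proof. unfold comm. intro H. rewrite <- !conj_app, H. reflexivity. Qed.

End Words.

Section Subst.
Context {X Y : Type} (f : X -> word Y).

Lemma subst_app u v : subst f (u ++ v) = subst f u ++ subst f v.
Proof. apply flat_map_app. Qed.

Lemma subst_inv_word u : subst f (inv_word u) = inv_word (subst f u).
Proof.
  induction u as [|[x b] u IH]. reflexivity.
  change (inv_word ((x, b) :: u)) with (inv_word u ++ [inv_letter (x, b)]).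
  change (subst f ((x, b) :: u)) with ((if b then inv_word (f x) else f x) ++ subst f u).
  rewrite subst_app, IH, inv_word_app. f_equal.
  unfold subst; simpl. rewrite app_nil_r.
  destruct b; simpl; rewrite ?inv_word_involutive; reflexivity.
Qed.

Lemma subst_gen x : subst f (gen x) = f x.
Proof. apply app_nil_r. Qed.

Lemma subst_wpow u k : subst f (wpow u k) = wpow (subst f u) k.
Proof.
  assert (Hrep : forall v n, subst f (wrep v n) = wrep (subst f v) n).
  { intros v n. induction n; [reflexivity|]. change (wrep ?x (S n)) with (x ++ wrep x n).
    rewrite subst_app, IHn. reflexivity. }
  unfold wpow. destruct (0 <=? k); rewrite Hrep, ?subst_inv_word; reflexivity.
Qed.

End Subst.

(** * Britton's lemma in BS(m, q) *)

Notation bpow k := (wpow (gen gb) k).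

Lemma mod_id_div m t : m <> 0 -> t mod m = t -> t / m = 0.
Proof.
  intros Hm H. pose proof (Z.div_mod t m Hm) as E. rewrite H in E.
  assert (m * (t / m) = 0) as E' by lia. apply Z.mul_eq_0 in E'. lia.
Qed.

Lemma mod_mul_l m t : m <> 0 -> (m * t) mod m = 0.
Proof. intro. rewrite Z.mul_comm. apply Z.mod_mul; auto. Qed.

Lemma div_mul_l m t : m <> 0 -> (m * t) / m = t.
Proof. intro. rewrite Z.mul_comm. apply Z.div_mul; auto. Qed.

Lemma mod_add_mul_l m t a : m <> 0 -> (t + m * a) mod m = t mod m.
Proof. intro. rewrite Z.mul_comm. apply Z.mod_add; auto. Qed.

Lemma div_add_mul_l m t a : m <> 0 -> (t + m * a) / m = t / m + a.
Proof. intro. rewrite Z.mul_comm. apply Z.div_add; auto. Qed.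

Lemma mod_add_of_mod_0 K v q : q <> 0 -> K mod q = 0 -> (K + v) mod q = v mod q.
Proof. intros Hq H. rewrite Z.add_mod, H by auto. rewrite Z.add_0_l. apply Z.mod_mod; auto. Qed.

Lemma mod_nonzero_of_abs_lt a q : 0 < Z.abs a < Z.abs q -> a mod q <> 0.
Proof.
  intros [H1 H2] H. assert (Hq : q <> 0) by lia.
  pose proof (Z.div_mod a q Hq) as E. rewrite H, Z.add_0_r in E.
  assert (Z.abs a = Z.abs q * Z.abs (a / q)) by (rewrite E at 1; apply Z.abs_mul).
  assert (a / q <> 0) by (intro Hz; rewrite Hz in E; lia).
  nia.
Qed.

Section Britton.
Variables m q : Z.
Hypotheses (hm : m <> 0) (hq : q <> 0).

(* A state (S, k) stands for the normal form b^t_1 a^e_1 ... b^t_n a^e_n b^k of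
   an element of BS(m, q), where S = [(t_n, e_n); ...; (t_1, e_1)] lists the
   syllables from the right and e = true means a^-1.  Right multiplication by
   a generator uses b^q a = a b^m and b^m a^-1 = a^-1 b^q. *)
Definition nform : Type := (list (Z * bool) * Z)%type.

Definition nf_a (x : nform) : nform :=
  let (S, k) := x in
  match S with
  | (t', true) :: S' =>
      if k mod q =? 0 then (S', t' + m * (k / q)) else ((k mod q, false) :: S, m * (k / q))
  | _ => ((k mod q, false) :: S, m * (k / q))
  end.

Definition nf_ainv (x : nform) : nform :=
  let (S, k) := x in
  match S with
  | (t', false) :: S' =>
      if k mod m =? 0 then (S', t' + q * (k / m)) else ((k mod m, true) :: S, q * (k / m))
  | _ => ((k mod m, true) :: S, q * (k / m))
  end.

Definition nf_letter (x : nform) (l : letter gen2) : nform :=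
  match l with
  | (ga, false) => nf_a x
  | (ga, true) => nf_ainv x
  | (gb, false) => (fst x, snd x + 1)
  | (gb, true) => (fst x, snd x - 1)
  end.

Definition nf_act (x : nform) (w : word gen2) : nform := fold_left nf_letter w x.

Definition nf_syllable_ok (e : Z * bool) : Prop :=
  let (t, b) := e in if b then t mod m = t else t mod q = t.

Fixpoint nf_no_backtrack (S : list (Z * bool)) : Prop :=
  match S with
  | (t1, b1) :: ((t2, b2) :: _) as S' => (b1 = b2 \/ t1 <> 0) /\ nf_no_backtrack S'
  | _ => True
  end.

Definition nf_valid (x : nform) : Prop := Forall nf_syllable_ok (fst x) /\ nf_no_backtrack (fst x).

Lemma nf_act_app x u v : nf_act x (u ++ v) = nf_act (nf_act x u) v.
Proof. apply fold_left_app. Qed.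

Lemma nf_no_backtrack_tail t b S : nf_no_backtrack ((t, b) :: S) -> nf_no_backtrack S.
Proof. destruct S as [|[t2 b2] S]; simpl; tauto. Qed.

Lemma nf_a_valid x : nf_valid x -> nf_valid (nf_a x).
Proof.
  intros [H1 H2]. destruct x as [S k]. simpl in *.
  assert (Hr : (k mod q) mod q = k mod q) by (apply Z.mod_mod; auto).
  destruct S as [|[t' [|]] S']; try (split; simpl; auto; fail).
  destruct (k mod q =? 0) eqn:E.
  - inversion H1; subst. split; simpl; auto. eapply nf_no_backtrack_tail; eauto.
  - apply Z.eqb_neq in E. split; simpl; auto.
Qed.

Lemma nf_ainv_valid x : nf_valid x -> nf_valid (nf_ainv x).
Proof.
  intros [H1 H2]. destruct x as [S k]. simpl in *.
  assert (Hr : (k mod m) mod m = k mod m) by (apply Z.mod_mod; auto).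
  destruct S as [|[t' [|]] S']; try (split; simpl; auto; fail).
  destruct (k mod m =? 0) eqn:E.
  - inversion H1; subst. split; simpl; auto. eapply nf_no_backtrack_tail; eauto.
  - apply Z.eqb_neq in E. split; simpl; auto.
Qed.

Lemma nf_act_valid x w : nf_valid x -> nf_valid (nf_act x w).
Proof.
  revert x; induction w as [|l w IH]; intros x H; simpl; auto.
  apply IH. destruct l as [[] []]; simpl.
  - apply nf_ainv_valid; auto.
  - apply nf_a_valid; auto.
  - destruct x; exact H.
  - destruct x; exact H.
Qed.

Lemma nf_ainv_a x : nf_valid x -> nf_ainv (nf_a x) = x.
Proof.
  intros [H1 H2]. destruct x as [S k]. simpl in *.
  pose proof (Z.div_mod k q hq) as Ek.
  destruct S as [|[t' [|]] S'];
    try (simpl; rewrite mod_mul_l, div_mul_l by auto; simpl; f_equal; lia).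
  destruct (k mod q =? 0) eqn:E.
  - apply Z.eqb_eq in E. inversion H1; subst. simpl in *.
    assert (E1 : (t' + m * (k / q)) mod m = t') by (rewrite mod_add_mul_l; auto).
    assert (E2 : (t' + m * (k / q)) / m = k / q)
      by (rewrite div_add_mul_l, (mod_id_div m t'); auto).
    rewrite E1, E2.
    destruct S' as [|[t2 [|]] S'']; try (f_equal; lia).
    destruct H2 as [[H2|H2] _]; [discriminate|].
    apply Z.eqb_neq in H2. rewrite H2. f_equal. lia.
  - simpl. rewrite mod_mul_l, div_mul_l by auto. simpl. f_equal. lia.
Qed.

Lemma nf_a_ainv x : nf_valid x -> nf_a (nf_ainv x) = x.
Proof.
  intros [H1 H2]. destruct x as [S k]. simpl in *.
  pose proof (Z.div_mod k m hm) as Ek.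
  destruct S as [|[t' [|]] S'];
    try (simpl; rewrite mod_mul_l, div_mul_l by auto; simpl; f_equal; lia).
  destruct (k mod m =? 0) eqn:E.
  - apply Z.eqb_eq in E. inversion H1; subst. simpl in *.
    assert (E1 : (t' + q * (k / m)) mod q = t') by (rewrite mod_add_mul_l; auto).
    assert (E2 : (t' + q * (k / m)) / q = k / m)
      by (rewrite div_add_mul_l, (mod_id_div q t'); auto).
    rewrite E1, E2.
    destruct S' as [|[t2 [|]] S'']; try (f_equal; lia).
    destruct H2 as [[H2|H2] _]; [discriminate|].
    apply Z.eqb_neq in H2. rewrite H2. f_equal. lia.
  - simpl. rewrite mod_mul_l, div_mul_l by auto. simpl. f_equal. lia.
Qed.

Lemma nf_act_bpow x k : nf_act x (bpow k) = (fst x, snd x + k).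
Proof.
  assert (Hpos : forall x n, nf_act x (wrep (gen gb) n) = (fst x, snd x + Z.of_nat n)).
  { intros y n. revert y; induction n; intro y; [destruct y; simpl; f_equal; lia|].
    change (wrep ?w (S n)) with (w ++ wrep w n). rewrite nf_act_app, IHn. simpl. f_equal. lia. }
  assert (Hneg : forall x n, nf_act x (wrep (inv_word (gen gb)) n) = (fst x, snd x - Z.of_nat n)).
  { intros y n. revert y; induction n; intro y; [destruct y; simpl; f_equal; lia|].
    change (wrep ?w (S n)) with (w ++ wrep w n). rewrite nf_act_app, IHn. simpl. f_equal. lia. }
  unfold wpow. destruct (0 <=? k) eqn:E; [rewrite Hpos | rewrite Hneg]; f_equal.
  - apply Z.leb_le in E. lia.
  - apply Z.leb_gt in E. lia.
Qed.

Arguments nf_a : simpl never.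
Arguments nf_ainv : simpl never.

Lemma nf_act_relator x : nf_valid x ->
  nf_act x (gen ga ++ bpow m ++ inv_word (gen ga) ++ inv_word (bpow q)) = x.
Proof.
  intros [H1 H2]. rewrite <- wpow_opp, !nf_act_app, !nf_act_bpow.
  change (nf_act ?y (inv_word (gen ga))) with (nf_ainv y).
  change (nf_act ?y (gen ga)) with (nf_a y). destruct x as [S k]. simpl in *.
  pose proof (Z.div_mod k q hq) as Ek.
  assert (Hc : forall S0, nf_ainv ((k mod q, false) :: S0, m * (k / q) + m) = (S0, k + q)).
  { intro S0. replace (m * (k / q) + m) with (m * (k / q + 1)) by ring. unfold nf_ainv.
    rewrite mod_mul_l, div_mul_l by auto. simpl. f_equal. lia. }
  destruct S as [|[t' [|]] S'].
  - change (nf_a ([], k)) with ([(k mod q, false)], m * (k / q)). simpl. rewrite Hc. simpl. f_equal. lia.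
  - destruct (k mod q =? 0) eqn:E.
    + replace (nf_a ((t', true) :: S', k)) with (S', t' + m * (k / q))
        by (unfold nf_a; rewrite E; reflexivity).
      apply Z.eqb_eq in E. inversion H1; subst. simpl in *.
      replace (t' + m * (k / q) + m) with (t' + m * (k / q + 1)) by ring.
      assert (E1 : (t' + m * (k / q + 1)) mod m = t') by (rewrite mod_add_mul_l; auto).
      assert (E2 : (t' + m * (k / q + 1)) / m = k / q + 1)
        by (rewrite div_add_mul_l, (mod_id_div m t'); auto).
      unfold nf_ainv; rewrite E1, E2.
      destruct S' as [|[t2 [|]] S'']; try (simpl; f_equal; lia).
      destruct H2 as [[H2|H2] _]; [discriminate|].
      apply Z.eqb_neq in H2. rewrite H2. simpl. f_equal. lia.
    + replace (nf_a ((t', true) :: S', k)) with ((k mod q, false) :: (t', true) :: S', m * (k / q))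
        by (unfold nf_a; rewrite E; reflexivity).
      simpl. rewrite Hc. simpl. f_equal. lia.
  - change (nf_a ((t', false) :: S', k)) with ((k mod q, false) :: (t', false) :: S', m * (k / q)).
    simpl. rewrite Hc. simpl. f_equal. lia.
Qed.

Lemma nf_act_weq u v : weq (BS_rel m q) u v ->
  forall x, nf_valid x -> nf_act x u = nf_act x v.
Proof.
  intro H. induction H; intros y Hy.
  - reflexivity.
  - symmetry; auto.
  - rewrite IHweq1, IHweq2; auto.
  - rewrite !nf_act_app, IHweq1 by auto. apply IHweq2, nf_act_valid, Hy.
  - destruct x as [[] []]; simpl.
    + apply nf_a_ainv; auto.
    + apply nf_ainv_a; auto.
    + destruct y; simpl; f_equal; lia.
    + destruct y; simpl; f_equal; lia.
  - unfold BS_rel in H. subst. apply nf_act_relator; auto.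
Qed.

Lemma nf_valid_nil : nf_valid ([], 0).
Proof. split; simpl; auto. Qed.

Lemma bpow_trivial k : weq (BS_rel m q) (bpow k) [] -> k = 0.
Proof.
  intro H. pose proof (nf_act_weq _ _ H ([], 0) nf_valid_nil) as E.
  rewrite nf_act_bpow in E. simpl in E. congruence.
Qed.

Fixpoint bs_tail (L : list (bool * Z)) : word gen2 :=
  match L with
  | [] => []
  | (e, v) :: L' => (ga, e) :: bpow v ++ bs_tail L'
  end.

Definition bs_word (k0 : Z) (L : list (bool * Z)) : word gen2 := bpow k0 ++ bs_tail L.

Fixpoint bs_pinch_free (L : list (bool * Z)) : Prop :=
  match L with
  | (e, v) :: (((e', _) :: _) as L') =>
      (e = e' \/ v mod (if e then q else m) <> 0) /\ bs_pinch_free L'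
  | _ => True
  end.

(* The state right after a letter a^e: its last syllable has sign e and the pending
   power of b is divisible by q (e = true) or m.  A pinch-free continuation then
   always pushes a new syllable, which is how Britton's lemma is obtained. *)
Definition nf_after_a (e : bool) (x : nform) : Prop :=
  (exists t S', fst x = (t, e) :: S') /\ (snd x) mod (if e then q else m) = 0.

Lemma nf_after_a_step e e' x v : nf_after_a e x ->
  (e = e' \/ v mod (if e then q else m) <> 0) ->
  nf_after_a e' (nf_letter (fst x, snd x + v) (ga, e')) /\
  length (fst (nf_letter (fst x, snd x + v) (ga, e'))) = S (length (fst x)).
Proof.
  intros [[t [S' HS]] HK] Hp. destruct x as [S k]. simpl in *. subst S.
  assert (Hgrow : forall b n (w : nform),
      w = ((n, b) :: (t, e) :: S', (if b then q else m) * ((k + v) / (if b then m else q))) ->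
      nf_after_a b w /\ length (fst w) = S (length ((t, e) :: S'))).
  { intros b n w ->.
    split; [split; [simpl; eauto | apply mod_mul_l; destruct b; auto] | reflexivity]. }
  destruct e, e'; simpl nf_letter.
  - apply (Hgrow true ((k + v) mod m)). reflexivity.
  - destruct Hp as [Hp|Hp]; [discriminate|].
    assert (E : (k + v) mod q <> 0) by (rewrite mod_add_of_mod_0; auto).
    apply Z.eqb_neq in E. apply (Hgrow false ((k + v) mod q)).
    unfold nf_a; rewrite E; reflexivity.
  - destruct Hp as [Hp|Hp]; [discriminate|].
    assert (E : (k + v) mod m <> 0) by (rewrite mod_add_of_mod_0; auto).
    apply Z.eqb_neq in E. apply (Hgrow true ((k + v) mod m)).
    unfold nf_ainv; rewrite E; reflexivity.
  - apply (Hgrow false ((k + v) mod q)). reflexivity.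
Qed.

Lemma nf_act_pinch_free_length L e v x : nf_after_a e x -> bs_pinch_free ((e, v) :: L) ->
  length (fst (nf_act x (bpow v ++ bs_tail L))) = (length (fst x) + length L)%nat.
Proof.
  revert e v x. induction L as [|[e' v'] L IH]; intros e v x Hg Hp.
  - simpl. rewrite app_nil_r, nf_act_bpow. simpl. lia.
  - simpl bs_tail. rewrite nf_act_app, nf_act_bpow.
    change (nf_act ?y ((ga, e') :: ?w)) with (nf_act (nf_letter y (ga, e')) w).
    destruct Hp as [Hp1 Hp2].
    destruct (nf_after_a_step e e' x v Hg Hp1) as [Hg' Hl].
    rewrite (IH e'), Hl by auto. simpl. lia.
Qed.

Lemma bs_word_nontrivial k0 L : L <> [] -> bs_pinch_free L ->
  ~ weq (BS_rel m q) (bs_word k0 L) [].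
Proof.
  intros HL Hp Htriv. destruct L as [|[e v] L]; [congruence|].
  pose proof (nf_act_weq _ _ Htriv ([], 0) nf_valid_nil) as Hact.
  unfold bs_word in Hact. simpl bs_tail in Hact.
  rewrite nf_act_app, nf_act_bpow in Hact. cbn [fst snd] in Hact.
  change (nf_act ?y ((ga, e) :: ?w)) with (nf_act (nf_letter y (ga, e)) w) in Hact.
  assert (Hg : nf_after_a e (nf_letter ([], 0 + k0) (ga, e))).
  { destruct e; unfold nf_letter, nf_a, nf_ainv;
      (split; [simpl; eauto | apply mod_mul_l; auto]). }
  pose proof (nf_act_pinch_free_length L e v _ Hg Hp) as Hl.
  rewrite Hact in Hl. destruct Hg as [[t [S' HS]] _]. rewrite HS in Hl. simpl in Hl. lia.
Qed.

End Britton.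

(** * Vectors of E and conjugation by a in BS~(m, xi) *)

Definition ew (i : nat) : word genT := gen (tE i).
Definition aw : word genT := gen tA.

Fixpoint evec (off : nat) (v : list Z) : word genT :=
  match v with
  | [] => []
  | c :: v' => wpow (ew off) c ++ evec (S off) v'
  end.

Fixpoint vadd (v w : list Z) : list Z :=
  match v, w with
  | [], w => w
  | v, [] => v
  | a :: v', b :: w' => (a + b) :: vadd v' w'
  end.

Lemma vadd_length v w : length (vadd v w) = Nat.max (length v) (length w).
Proof. revert w; induction v; intros [|b w]; simpl; auto. Qed.

Definition hd0 (v : list Z) : Z := match v with [] => 0 | c :: _ => c end.

Lemma evec_hd0_tl off v : evec off v = evec off (hd0 v :: tl v).
Proof. destruct v; reflexivity. Qed.

Fixpoint rsum (r : nat -> Z) (off : nat) (v : list Z) : Z :=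
  match v with [] => 0 | c :: v' => c * r off + rsum r (S off) v' end.

(* Writing v = c_0 e_0 + sum_(i>=1) c_i e_i = sum_(i>=1) c_i (e_i - r_i e_0) + res v e_0
   shows that v lies in E_(m,xi) exactly when m divides res v; phi is then the
   HNN isomorphism, and phiinv its inverse on E_1 (vectors with hd0 v = 0). *)
Definition res (r : nat -> Z) (v : list Z) : Z := hd0 v + rsum r 1 (tl v).
Definition phi (m : Z) (r : nat -> Z) (v : list Z) : list Z := 0 :: (res r v / m) :: tl v.
Definition phiinv (m : Z) (r : nat -> Z) (v : list Z) : list Z :=
  (m * hd0 (tl v) - rsum r 1 (tl (tl v))) :: tl (tl v).

Section TildeBS.
Variables (m : Z) (r : nat -> Z).
Hypothesis hm : m <> 0.
Local Notation RT := (tBS_rel m r).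

Lemma comm_ew_ew i j : comm RT (ew i) (ew j).
Proof.
  apply weq_of_app_inv_nil. rewrite inv_word_app, !app_assoc.
  apply weq_rel. left. exists i, j. unfold ew. rewrite <- !app_assoc. reflexivity.
Qed.

Lemma comm_ew_evec i off v : comm RT (ew i) (evec off v).
Proof.
  revert off; induction v; intro off; simpl; [apply comm_nil_r|].
  apply comm_app_r; auto. apply comm_wpow_r, comm_ew_ew.
Qed.

Lemma evec_vadd off v w : weq RT (evec off v ++ evec off w) (evec off (vadd v w)).
Proof.
  revert off w. induction v as [|a v IH]; intros off [|b w]; simpl;
    rewrite ?app_nil_r; try reflexivity.
  rewrite <- wpow_add, <- !app_assoc. f_equiv. rewrite !app_assoc.
  assert (Hc : comm RT (evec (S off) v) (wpow (ew off) b))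
    by (apply comm_wpow_r, comm_sym, comm_ew_evec).
  unfold comm in Hc. rewrite Hc, <- !app_assoc. f_equiv. apply IH.
Qed.

Definition ae0 : word genT := conj aw (ew 0).

Lemma conj_a_e0_pow_m : weq RT (conj aw (wpow (ew 0) m)) (ew 1).
Proof.
  apply weq_of_app_inv_nil, weq_rel. right; left.
  unfold conj, aw, ew. rewrite <- !app_assoc. reflexivity.
Qed.

Lemma conj_a_ew_shift i : (1 <= i)%nat ->
  weq RT (conj aw (ew i ++ wpow (ew 0) (- r i))) (ew (S i)).
Proof.
  intro Hi. apply weq_of_app_inv_nil, weq_rel. right; right. exists i. split; auto.
  unfold conj, aw, ew. rewrite <- !app_assoc. reflexivity.
Qed.

Lemma conj_a_ew i : (1 <= i)%nat -> weq RT (conj aw (ew i)) (ew (S i) ++ wpow ae0 (r i)).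
Proof.
  intro Hi. rewrite <- (conj_a_ew_shift i Hi), conj_app, conj_wpow. fold ae0.
  rewrite <- app_assoc, wpow_add, Z.add_opp_diag_l, app_nil_r. reflexivity.
Qed.

Lemma comm_ae0_ew j : (1 <= j)%nat -> comm RT ae0 (ew j).
Proof.
  intro Hj. destruct j as [|[|i]]; [lia| |].
  - rewrite <- conj_a_e0_pow_m. apply comm_conj, comm_wpow_r, comm_ew_ew.
  - rewrite <- (conj_a_ew_shift (S i)) by lia.
    apply comm_conj, comm_app_r; [apply comm_ew_ew | apply comm_wpow_r, comm_ew_ew].
Qed.

Lemma conj_a_evec off v : (1 <= off)%nat ->
  weq RT (conj aw (evec off v)) (wpow ae0 (rsum r off v) ++ evec (S off) v).
Proof.
  revert off; induction v as [|c v IH]; intros off Hoff; simpl; [apply conj_nil|].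
  rewrite conj_app, conj_wpow, conj_a_ew, IH by lia.
  assert (Hc : comm RT (ew (S off)) ae0) by (apply comm_sym, comm_ae0_ew; lia).
  rewrite wpow_app_of_comm, wpow_mul by (apply comm_wpow_r; auto).
  assert (Hc2 : comm RT (wpow ae0 (r off * c + rsum r (S off) v)) (wpow (ew (S off)) c))
    by (apply comm_wpow_r, comm_sym, comm_wpow_r; auto).
  unfold comm in Hc2.
  rewrite <- app_assoc, (app_assoc (wpow ae0 (r off * c))), wpow_add, app_assoc, <- Hc2.
  replace (r off * c + rsum r (S off) v) with (c * r off + rsum r (S off) v) by ring.
  rewrite <- app_assoc. reflexivity.
Qed.

Lemma conj_a_evec_phi v : res r v mod m = 0 ->
  weq RT (conj aw (evec 0 v)) (evec 0 (phi m r v)).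
Proof.
  intro Hres. rewrite (evec_hd0_tl 0 v). simpl evec.
  rewrite conj_app, conj_wpow, conj_a_evec by lia. fold ae0.
  rewrite app_assoc, wpow_add. change (hd0 v + rsum r 1 (tl v)) with (res r v).
  pose proof (Z.div_mod (res r v) m hm) as E. rewrite Hres, Z.add_0_r in E.
  rewrite E at 1. rewrite <- wpow_mul. unfold ae0.
  rewrite <- conj_wpow, conj_a_e0_pow_m. reflexivity.
Qed.

Lemma conj_ainv_evec_phiinv v : hd0 v = 0 ->
  weq RT (conj (inv_word aw) (evec 0 v)) (evec 0 (phiinv m r v)).
Proof.
  intro Hv.
  assert (E1 : res r (phiinv m r v) = m * hd0 (tl v)) by (unfold res, phiinv; simpl; ring).
  assert (E2 : evec 0 (phi m r (phiinv m r v)) = evec 0 v).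
  { unfold phi. rewrite E1, div_mul_l by auto.
    destruct v as [|c [|d v]]; simpl in Hv |- *; subst; reflexivity. }
  rewrite <- E2, <- conj_a_evec_phi by (rewrite E1; apply mod_mul_l; auto).
  unfold conj. rewrite inv_word_involutive, <- !app_assoc, weq_inv_app_cancel.
  rewrite weq_app_inv_l, app_nil_r. reflexivity.
Qed.

Fixpoint tbs_tail (L : list (bool * list Z)) : word genT :=
  match L with [] => [] | (e, v) :: L' => (tA, e) :: evec 0 v ++ tbs_tail L' end.
Definition tbs_word (v0 : list Z) (L : list (bool * list Z)) : word genT := evec 0 v0 ++ tbs_tail L.

Definition pinchb (e e' : bool) (v : list Z) : bool :=
  if Bool.eqb e e' then false else if e then hd0 v =? 0 else res r v mod m =? 0.

Definition contract (e : bool) (v : list Z) : list Z := if e then phiinv m r v else phi m r v.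

Lemma contract_weq e e' v : pinchb e e' v = true ->
  weq RT ((tA, e) :: evec 0 v ++ [(tA, e')]) (evec 0 (contract e v)).
Proof.
  unfold pinchb, contract. destruct e, e'; simpl; intro H; try discriminate;
    apply Z.eqb_eq in H.
  - exact (conj_ainv_evec_phiinv v H).
  - exact (conj_a_evec_phi v H).
Qed.

Fixpoint reduce_step (p : list Z) (L : list (bool * list Z))
  : option (list Z * list (bool * list Z)) :=
  match L with
  | (e, v) :: (((e', v') :: L'') as L') =>
      if pinchb e e' v then Some (vadd p (vadd (contract e v) v'), L'')
      else match reduce_step v L' with
           | Some (p', L2) => Some (p, (e, p') :: L2)
           | None => None
           end
  | _ => None
  end.

Fixpoint tbs_pinch_free (L : list (bool * list Z)) : Prop :=
  match L with
  | (e, v) :: (((e', _) :: _) as L') => pinchb e e' v = false /\ tbs_pinch_free L'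
  | _ => True
  end.

Lemma reduce_step_weq L p p' L' : reduce_step p L = Some (p', L') ->
  weq RT (tbs_word p L) (tbs_word p' L').
Proof.
  revert p p' L'. induction L as [|[e v] L IH]; intros p p' L' H; [simpl in H; discriminate|].
  simpl in H. destruct L as [|[e' v'] L'']; [discriminate|].
  destruct (pinchb e e' v) eqn:Ep.
  - injection H as <- <-. unfold tbs_word. simpl tbs_tail.
    replace ((tA, e) :: evec 0 v ++ (tA, e') :: evec 0 v' ++ tbs_tail L'')
      with (((tA, e) :: evec 0 v ++ [(tA, e')]) ++ evec 0 v' ++ tbs_tail L'')
      by (simpl; rewrite <- app_assoc; reflexivity).
    rewrite contract_weq, (app_assoc (evec 0 (contract e v))), evec_vadd, app_assoc, evec_vadd
      by auto.
    reflexivity.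
  - destruct (reduce_step v ((e', v') :: L'')) as [[p2 L2]|] eqn:E; [|discriminate].
    injection H as <- <-. apply IH in E. unfold tbs_word in *.
    change (tbs_tail ((e, ?w) :: ?K)) with ((tA, e) :: (evec 0 w ++ tbs_tail K)).
    rewrite E. reflexivity.
Qed.

Lemma reduce_step_length L p p' L' : reduce_step p L = Some (p', L') ->
  length L = S (S (length L')).
Proof.
  revert p p' L'. induction L as [|[e v] L IH]; intros p p' L' H; [simpl in H; discriminate|].
  simpl in H. destruct L as [|[e' v'] L'']; [discriminate|].
  destruct (pinchb e e' v).
  - injection H as <- <-. reflexivity.
  - destruct (reduce_step v ((e', v') :: L'')) as [[p2 L2]|] eqn:E; [|discriminate].
    injection H as <- <-. apply IH in E. simpl in *. lia.
Qed.

Lemma reduce_step_None_pinch_free L p : reduce_step p L = None -> tbs_pinch_free L.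
Proof.
  revert p. induction L as [|[e v] L IH]; intros p H; simpl; auto.
  simpl in H. destruct L as [|[e' v'] L'']; auto.
  destruct (pinchb e e' v); [discriminate|].
  destruct (reduce_step v ((e', v') :: L'')) as [[p2 L2]|] eqn:E; [discriminate|].
  split; auto. apply (IH v E).
Qed.

Fixpoint reduce (n : nat) (p : list Z) (L : list (bool * list Z))
  : list Z * list (bool * list Z) :=
  match n with
  | O => (p, L)
  | S n' => match reduce_step p L with Some (p', L') => reduce n' p' L' | None => (p, L) end
  end.

Lemma reduce_weq n p L :
  weq RT (tbs_word p L) (tbs_word (fst (reduce n p L)) (snd (reduce n p L))).
Proof.
  revert p L. induction n; intros p L; simpl; [reflexivity|].
  destruct (reduce_step p L) as [[p' L']|] eqn:E; [|reflexivity].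
  rewrite (reduce_step_weq L p p' L' E). apply IHn.
Qed.

Lemma reduce_pinch_free n p L : (length L <= n)%nat -> tbs_pinch_free (snd (reduce n p L)).
Proof.
  revert p L. induction n; intros p L Hl; simpl.
  - destruct L; [exact I | simpl in Hl; lia].
  - destruct (reduce_step p L) as [[p' L']|] eqn:E.
    + apply IHn. apply reduce_step_length in E. lia.
    + eapply reduce_step_None_pinch_free; eauto.
Qed.

Definition vbound (B : nat) (p : list Z) (L : list (bool * list Z)) : Prop :=
  (length p <= B)%nat /\ Forall (fun x => (length (snd x) <= B)%nat) L.

Lemma vbound_mono B B' p L : (B <= B')%nat -> vbound B p L -> vbound B' p L.
Proof.
  intros Hb [H1 H2]. split; [lia|]. eapply Forall_impl; [|exact H2]. intros x Hx; simpl in *; lia.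
Qed.

Lemma contract_length e v : (length (contract e v) <= Nat.max 2 (S (length v)))%nat.
Proof. unfold contract, phi, phiinv. destruct e; destruct v as [|c [|d v]]; simpl; lia. Qed.

Lemma reduce_step_vbound B L p p' L' : reduce_step p L = Some (p', L') ->
  vbound B p L -> vbound (Nat.max 2 (S B)) p' L'.
Proof.
  revert p p' L'. induction L as [|[e v] L IH]; intros p p' L' H HB; [simpl in H; discriminate|].
  simpl in H. destruct L as [|[e' v'] L'']; [discriminate|].
  destruct HB as [Hp HL]. inversion HL as [|? ? Hv HL1]; subst.
  inversion HL1 as [|? ? Hv' HL2]; subst. simpl in Hv, Hv'.
  destruct (pinchb e e' v).
  - injection H as <- <-. split.
    + rewrite !vadd_length. pose proof (contract_length e v). lia.
    + eapply Forall_impl; [|exact HL2]. intros [? ?] Hx; cbn [snd] in *; lia.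
  - destruct (reduce_step v ((e', v') :: L'')) as [[p2 L2]|] eqn:E; [|discriminate].
    injection H as <- <-. apply IH in E; [|split; auto]. destruct E as [E1 E2].
    split; [lia|]. constructor; auto.
Qed.

Lemma reduce_vbound n B p L : vbound B p L -> (1 <= B)%nat ->
  vbound (B + n) (fst (reduce n p L)) (snd (reduce n p L)).
Proof.
  revert B p L. induction n; intros B p L HB HB1; simpl.
  - rewrite Nat.add_0_r; auto.
  - destruct (reduce_step p L) as [[p' L']|] eqn:E; simpl.
    + apply (reduce_step_vbound B) in E; auto.
      replace (B + S n)%nat with (S B + n)%nat by lia.
      replace (Nat.max 2 (S B)) with (S B) in E by lia. apply IHn; auto; lia.
    + apply (vbound_mono B); auto; lia.
Qed.

End TildeBS.

(** * Comparison with BS(m, q) for q close to xi *)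

(* The integer analogue, up to depth H, of the recursion xi s_i = m s_(i+1) + r_(i+1). *)
Definition rs_recursion (m q : Z) (r : nat -> Z) (s : nat -> Z) (H : nat) : Prop :=
  s O = 1 /\ forall i, (i < H)%nat -> m * s (S i) = q * s i - r (S i).

(* In BS(m, q) the element b_i equals b^(eexp q s i), so a vector v of E corresponds
   to b^(psi q s v). *)
Definition eexp (q : Z) (s : nat -> Z) (i : nat) : Z := match i with O => 1 | S j => q * s j end.

Fixpoint psi_from (q : Z) (s : nat -> Z) (off : nat) (v : list Z) : Z :=
  match v with [] => 0 | c :: v' => c * eexp q s off + psi_from q s (S off) v' end.
Definition psi (q : Z) (s : nat -> Z) (v : list Z) : Z := psi_from q s 0 v.

Fixpoint ssum (s : nat -> Z) (off : nat) (v : list Z) : Z :=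
  match v with [] => 0 | c :: v' => c * s off + ssum s (S off) v' end.

Definition psi_list (q : Z) (s : nat -> Z) (L : list (bool * list Z)) : list (bool * Z) :=
  map (fun x => (fst x, psi q s (snd x))) L.

Lemma psi_from_succ q s off v : psi_from q s (S off) v = q * ssum s off v.
Proof. revert off; induction v as [|c v IH]; intro off; simpl; [ring|]. rewrite IH. ring. Qed.

Lemma psi_from_vadd q s v w off : psi_from q s off (vadd v w) = psi_from q s off v + psi_from q s off w.
Proof. revert w off; induction v; intros [|b w] off; simpl; try ring. rewrite IHv. ring. Qed.

Lemma psi_hd0_tl q s v : psi q s v = hd0 v + psi_from q s 1 (tl v).
Proof. destruct v; unfold psi; simpl; ring. Qed.

Lemma Forall_tl {A} (P : A -> Prop) v : Forall P v -> Forall P (tl v).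
Proof. destruct v; simpl; auto. intro H; inversion H; auto. Qed.

Lemma hd0_abs_bound C v : 0 <= C -> Forall (fun c => Z.abs c <= C) v -> Z.abs (hd0 v) <= C.
Proof. destruct v; simpl; intros; [lia|]. inversion H0; auto. Qed.

Lemma rsum_zero r v off : Forall (fun c => c = 0) v -> rsum r off v = 0.
Proof. revert off; induction v; intros off H; simpl; auto. inversion H; subst. rewrite IHv; auto. Qed.

(* Bounds the entries met along the iterated phiinv in psi_eq_0_small *)
Fixpoint growth_bound (ma : Z) (n : nat) (C : Z) : Z :=
  match n with O => C | S n' => growth_bound ma n' (ma * (Z.of_nat n' + 3) * C) end.

Lemma growth_bound_ge ma n C : 0 <= C -> 1 <= ma -> C <= growth_bound ma n C.
Proof.
  revert C; induction n; intros C HC Hma; simpl; [lia|].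
  assert (C <= ma * (Z.of_nat n + 3) * C) by nia.
  specialize (IHn (ma * (Z.of_nat n + 3) * C)). lia.
Qed.

Section Comparison.
Variables (m q : Z) (r : nat -> Z) (s : nat -> Z) (H : nat).
Hypotheses (hm : m <> 0) (hex : rs_recursion m q r s H).
Local Notation RB := (BS_rel m q).

Lemma psi_from_rsum v off : (1 <= off)%nat -> (off + length v <= S H)%nat ->
  psi_from q s off v - rsum r off v = m * ssum s off v.
Proof.
  destruct hex as [_ Hs]. revert off.
  induction v as [|c v IH]; intros off H1 H2; simpl; [ring|].
  simpl in H2. destruct off as [|j]; [lia|]. simpl eexp.
  assert (E : m * s (S j) = q * s j - r (S j)) by (apply Hs; lia).
  specialize (IH (S (S j)) ltac:(lia) ltac:(lia)).
  transitivity (c * (q * s j - r (S j)) + (psi_from q s (S (S j)) v - rsum r (S (S j)) v)); [ring|].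
  rewrite IH, <- E. ring.
Qed.

Lemma psi_res v : (length v <= S H)%nat -> psi q s v = res r v + m * ssum s 1 (tl v).
Proof.
  intro Hl. rewrite psi_hd0_tl. unfold res.
  pose proof (psi_from_rsum (tl v) 1 (le_n 1) ltac:(destruct v; simpl in *; lia)). lia.
Qed.

Lemma psi_phi v : psi q s (phi m r v) = q * (res r v / m + ssum s 1 (tl v)).
Proof.
  unfold phi, psi. simpl. rewrite psi_from_succ. destruct hex as [Hs0 _]. rewrite Hs0. ring.
Qed.

Lemma psi_hd0_add_q_mul v :
  psi q s v = hd0 v + q * (hd0 (tl v) + ssum s 1 (tl (tl v))).
Proof.
  destruct hex as [Hs0 _].
  rewrite psi_hd0_tl, psi_from_succ. destruct v as [|c [|d v]]; simpl; rewrite ?Hs0; ring.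
Qed.

Lemma psi_phiinv v : (length v <= S H)%nat ->
  psi q s (phiinv m r v) = m * (hd0 (tl v) + ssum s 1 (tl (tl v))).
Proof.
  intro Hl. unfold phiinv, psi. simpl.
  pose proof (psi_from_rsum (tl (tl v)) 1 (le_n 1)
    ltac:(destruct v as [|c [|d v]]; simpl in *; lia)). lia.
Qed.

Lemma conj_a_bpow_mul K : weq RB (conj (gen ga) (bpow (m * K))) (bpow (q * K)).
Proof.
  assert (Hrel : weq RB (conj (gen ga) (bpow m)) (bpow q)).
  { apply weq_of_app_inv_nil, weq_rel. unfold BS_rel, conj. rewrite <- !app_assoc. reflexivity. }
  rewrite <- wpow_mul, conj_wpow, Hrel, wpow_mul. reflexivity.
Qed.

Lemma conj_ainv_bpow_mul K : weq RB (conj (inv_word (gen ga)) (bpow (q * K))) (bpow (m * K)).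
Proof.
  rewrite <- conj_a_bpow_mul. unfold conj. rewrite inv_word_involutive, <- !app_assoc.
  rewrite weq_inv_app_cancel, weq_app_inv_l, app_nil_r. reflexivity.
Qed.

Lemma contract_bs e e' v : (length v <= S H)%nat -> pinchb m r e e' v = true ->
  weq RB ((ga, e) :: bpow (psi q s v) ++ [(ga, e')]) (bpow (psi q s (contract m r e v))).
Proof.
  intros Hl Hp. unfold pinchb, contract in *. destruct e, e'; simpl in Hp; try discriminate;
    apply Z.eqb_eq in Hp.
  - rewrite psi_hd0_add_q_mul, psi_phiinv, Hp, Z.add_0_l by auto. apply conj_ainv_bpow_mul.
  - rewrite psi_res, psi_phi by auto.
    pose proof (Z.div_mod (res r v) m hm) as E. rewrite Hp, Z.add_0_r in E.
    rewrite E at 1. rewrite <- Z.mul_add_distr_l. apply conj_a_bpow_mul.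
Qed.

Lemma reduce_step_bs L p p' L' : reduce_step m r p L = Some (p', L') -> vbound (S H) p L ->
  weq RB (bs_word (psi q s p) (psi_list q s L)) (bs_word (psi q s p') (psi_list q s L')).
Proof.
  revert p p' L'. induction L as [|[e v] L IH]; intros p p' L' Hr HB; [simpl in Hr; discriminate|].
  simpl in Hr. destruct L as [|[e' v'] L'']; [discriminate|].
  destruct HB as [Hp HL]. inversion HL as [|? ? Hv HL1]; subst. simpl in Hv.
  destruct (pinchb m r e e' v) eqn:Ep.
  - injection Hr as <- <-. unfold bs_word. simpl psi_list. simpl bs_tail.
    set (T := bs_tail (psi_list q s L'')).
    replace ((ga, e) :: bpow (psi q s v) ++ (ga, e') :: bpow (psi q s v') ++ T)
      with (((ga, e) :: bpow (psi q s v) ++ [(ga, e')]) ++ bpow (psi q s v') ++ T)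
      by (simpl; rewrite <- app_assoc; reflexivity).
    rewrite contract_bs by auto.
    rewrite (app_assoc (bpow (psi q s (contract m r e v)))), wpow_add, app_assoc, wpow_add.
    unfold psi. rewrite !psi_from_vadd. reflexivity.
  - destruct (reduce_step m r v ((e', v') :: L'')) as [[p2 L2]|] eqn:E; [|discriminate].
    injection Hr as <- <-. apply IH in E; [|split; auto].
    unfold bs_word in *. simpl psi_list in *. simpl bs_tail in *.
    rewrite E. reflexivity.
Qed.

Lemma reduce_bs n B p L : vbound B p L -> (1 <= B)%nat -> (B + n <= S H)%nat ->
  weq RB (bs_word (psi q s p) (psi_list q s L))
    (bs_word (psi q s (fst (reduce m r n p L))) (psi_list q s (snd (reduce m r n p L)))).
Proof.
  revert B p L. induction n; intros B p L HB HB1 HBH; simpl; [reflexivity|].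
  destruct (reduce_step m r p L) as [[p' L']|] eqn:E; simpl; [|reflexivity].
  pose proof E as E'. apply (reduce_step_vbound m r B) in E'; auto.
  rewrite (reduce_step_bs L p p' L' E) by (apply (vbound_mono B); auto; lia).
  apply (IHn (S B)); auto; [|lia]. replace (S B) with (Nat.max 2 (S B)) by lia. auto.
Qed.

Lemma psi_list_pinch_free L : tbs_pinch_free m r L ->
  Forall (fun x => (length (snd x) <= S H)%nat) L ->
  Forall (fun x => Z.abs (hd0 (snd x)) < Z.abs q) L -> bs_pinch_free m q (psi_list q s L).
Proof.
  induction L as [|[e v] L IH]; intros Hp Hl Hh; simpl; auto.
  destruct L as [|[e' v'] L'']; simpl; auto.
  inversion Hl; subst. inversion Hh; subst. simpl in *. destruct Hp as [Hp1 Hp2].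
  split; [|apply IH; auto].
  unfold pinchb in Hp1. destruct e, e'; simpl in Hp1; auto; right; apply Z.eqb_neq in Hp1.
  - rewrite psi_hd0_add_q_mul, mod_add_mul_l by lia. apply mod_nonzero_of_abs_lt. lia.
  - rewrite psi_res, mod_add_mul_l; auto.
Qed.

Hypothesis hr : forall i, 0 <= r (S i) < Z.abs m.

Lemma rsum_abs_bound C v off : 0 <= C -> (1 <= off)%nat -> Forall (fun c => Z.abs c <= C) v ->
  Z.abs (rsum r off v) <= Z.of_nat (length v) * C * Z.abs m.
Proof.
  intros HC. revert off. induction v as [|c v IH]; intros off Hoff Hv; cbn [rsum length]; [lia|].
  inversion Hv; subst. specialize (IH (S off) ltac:(lia) ltac:(assumption)).
  destruct off as [|j]; [lia|]. specialize (hr j).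
  assert (Z.abs (c * r (S j)) <= C * Z.abs m) by (rewrite Z.abs_mul; nia).
  rewrite Nat2Z.inj_succ. nia.
Qed.

Lemma phiinv_abs_bound C n v : 0 <= C -> Forall (fun c => Z.abs c <= C) v ->
  (length (tl (tl v)) <= n)%nat ->
  Forall (fun c => Z.abs c <= Z.abs m * (Z.of_nat n + 3) * C) (phiinv m r v).
Proof.
  intros HC Hb Hlen. assert (1 <= Z.abs m) by lia.
  pose proof (Forall_tl _ _ (Forall_tl _ _ Hb)) as Htt.
  unfold phiinv. constructor.
  - pose proof (rsum_abs_bound C (tl (tl v)) 1 HC (le_n 1) Htt) as Hrs.
    assert (Hd : Z.abs (hd0 (tl v)) <= C) by (apply hd0_abs_bound; auto; apply Forall_tl; auto).
    assert (Z.abs (m * hd0 (tl v)) <= Z.abs m * C) by (rewrite Z.abs_mul; nia).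
    assert (Z.of_nat (length (tl (tl v))) * C * Z.abs m <= Z.of_nat n * C * Z.abs m) by nia.
    nia.
  - eapply Forall_impl; [|exact Htt]. intros c Hc. cbv beta in *. nia.
Qed.

(* As psi v = hd0 v mod q and |hd0 v| < |q|, psi v = 0 forces hd0 v = 0, and then
   psi (phiinv v) = 0 with phiinv v one entry shorter. *)
Lemma psi_eq_0_small n v C : 0 <= C -> (length v <= S n)%nat -> (length v <= S H)%nat ->
  Forall (fun c => Z.abs c <= C) v -> growth_bound (Z.abs m) n C < Z.abs q ->
  psi q s v = 0 -> Forall (fun c => c = 0) v.
Proof.
  revert v C. induction n; intros v C HC Hl1 Hl2 Hb Hg Hpsi.
  - destruct v as [|c [|d v]]; simpl in Hl1; try lia; auto.
    unfold psi in Hpsi; simpl in Hpsi. constructor; auto. lia.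
  - pose proof (psi_hd0_add_q_mul v) as E1. pose proof (psi_phiinv v Hl2) as E2.
    set (X := hd0 (tl v) + ssum s 1 (tl (tl v))) in *.
    assert (Hh : Z.abs (hd0 v) <= C) by (apply hd0_abs_bound; auto).
    pose proof (growth_bound_ge (Z.abs m) (S n) C HC ltac:(lia)).
    assert (HX : X = 0).
    { destruct (Z.eq_dec X 0) as [|HX]; auto. exfalso.
      assert (Z.abs (hd0 v) = Z.abs q * Z.abs X).
      { rewrite <- Z.abs_mul. replace (hd0 v) with (- (q * X)) by lia. apply Z.abs_opp. }
      nia. }
    assert (Hz : Forall (fun c => c = 0) (phiinv m r v)).
    { apply (IHn _ (Z.abs m * (Z.of_nat n + 3) * C)); auto.
      - nia.
      - unfold phiinv; destruct v as [|c [|d v]]; simpl in *; lia.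
      - unfold phiinv; destruct v as [|c [|d v]]; simpl in *; lia.
      - apply phiinv_abs_bound; auto. destruct v as [|c [|d v]]; simpl in *; lia.
      - rewrite E2, HX. ring. }
    assert (Hh0 : hd0 v = 0) by (rewrite HX in E1; lia).
    unfold phiinv in Hz. inversion Hz as [|? ? Hz1 Hz2]; subst.
    rewrite rsum_zero, Z.sub_0_r in Hz1 by auto. apply Z.mul_eq_0 in Hz1.
    destruct v as [|c [|d v]]; simpl in *; subst; repeat constructor; auto; lia.
Qed.

End Comparison.

(* The integers s_i for BS(m, q): exact divisions once q is m-adically close to xi. *)
Fixpoint sq (m q : Z) (r : nat -> Z) (i : nat) : Z :=
  match i with O => 1 | S j => (q * sq m q r j - r (S j)) / m end.

Lemma pow_divide_le m a b : (a <= b)%nat -> (m ^ Z.of_nat a | m ^ Z.of_nat b).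
Proof. intro H. exists (m ^ Z.of_nat (b - a)). rewrite <- Z.pow_add_r by lia. f_equal. lia. Qed.

Section Exactness.
Variables (m : Z) (xi : nat -> Z) (r : nat -> Z) (s : nat -> nat -> Z) (q : Z) (H : nat).
Hypotheses (hm : m <> 0) (hrs : rs_spec m xi r s) (hq : (m ^ Z.of_nat H | q - xi H)).

Lemma pow_sub_succ i : (i < H)%nat -> m ^ Z.of_nat (H - i) = m * m ^ Z.of_nat (H - S i).
Proof.
  intro Hi. replace (Z.of_nat (H - i)) with (Z.succ (Z.of_nat (H - S i))) by lia.
  apply Z.pow_succ_r. lia.
Qed.

Lemma sq_recursion_close i : (i < H)%nat -> (m ^ Z.of_nat (H - i) | sq m q r i - s i H) ->
  (m ^ Z.of_nat (H - i) | q * sq m q r i - r (S i) - m * s (S i) H).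
Proof.
  intros Hi HD. destruct hrs as [_ [_ Hrs]]. destruct (Hrs i) as [_ [_ Hz]].
  specialize (Hz H). cbv beta in Hz.
  replace (q * sq m q r i - r (S i) - m * s (S i) H) with
    ((q - xi H) * sq m q r i + xi H * (sq m q r i - s i H)
     + (xi H * s i H - (m * s (S i) H + r (S i)))) by ring.
  assert (Hp : (m ^ Z.of_nat (H - i) | m ^ Z.of_nat H)) by (apply pow_divide_le; lia).
  apply Z.divide_add_r; [apply Z.divide_add_r|].
  - apply Z.divide_mul_l. eapply Z.divide_trans; eauto.
  - apply Z.divide_mul_r. auto.
  - eapply Z.divide_trans; eauto.
Qed.

Lemma sq_succ_exact i : (i < H)%nat -> (m ^ Z.of_nat (H - i) | sq m q r i - s i H) ->
  m * sq m q r (S i) = q * sq m q r i - r (S i).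
Proof.
  intros Hi HD. pose proof (sq_recursion_close i Hi HD) as HD2. rewrite pow_sub_succ in HD2 by auto.
  assert (Hm1 : (m | q * sq m q r i - r (S i))).
  { replace (q * sq m q r i - r (S i)) with
      ((q * sq m q r i - r (S i) - m * s (S i) H) + m * s (S i) H) by ring.
    apply Z.divide_add_r; [|apply Z.divide_factor_l].
    eapply Z.divide_trans; [|exact HD2]. apply Z.divide_factor_l. }
  simpl sq. apply Z.mod_divide in Hm1; auto. symmetry. apply Z_div_exact_full_2; auto.
Qed.

Lemma sq_close i : (i <= H)%nat -> (m ^ Z.of_nat (H - i) | sq m q r i - s i H).
Proof.
  induction i; intro Hi.
  - destruct hrs as [_ [Hs0 _]]. specialize (Hs0 H). cbv beta in Hs0.
    rewrite Nat.sub_0_r.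
    replace (sq m q r 0 - s 0%nat H) with (- (s 0%nat H - 1)) by (change (sq m q r 0) with 1; ring).
    apply Z.divide_opp_r. exact Hs0.
  - pose proof (IHi ltac:(lia)) as HD.
    pose proof (sq_recursion_close i ltac:(lia) HD) as HD2. rewrite pow_sub_succ in HD2 by lia.
    rewrite <- (sq_succ_exact i ltac:(lia) HD) in HD2.
    replace (m * sq m q r (S i) - m * s (S i) H) with (m * (sq m q r (S i) - s (S i) H)) in HD2 by ring.
    apply Z.mul_divide_cancel_l in HD2; auto.
Qed.

Lemma rs_recursion_sq : rs_recursion m q r (sq m q r) H.
Proof. split; [reflexivity|]. intros i Hi. apply sq_succ_exact; auto. apply sq_close. lia. Qed.

End Exactness.

Lemma rs_recursion_sq_eventually m xi r s xis H : m <> 0 -> rs_spec m xi r s -> zm_conv m xis xi ->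
  exists n0, forall n, (n0 <= n)%nat -> rs_recursion m (xis n) r (sq m (xis n) r) H.
Proof.
  intros Hm Hrs Hc. destruct (Hc H) as [n0 Hn0]. exists n0. intros n Hn.
  apply (rs_recursion_sq m xi r s); auto.
Qed.

(* Splits f(w) into its vectors and its letters a^e; b contributes e_0 = [1]. *)
Fixpoint f_syllables (w : word gen2) : list Z * list (bool * list Z) :=
  match w with
  | [] => ([], [])
  | (gb, b) :: w' => let (p, L) := f_syllables w' in (vadd [if b then -1 else 1] p, L)
  | (ga, b) :: w' => let (p, L) := f_syllables w' in ([], (b, p) :: L)
  end.

Lemma f_syllables_tbs m r w :
  weq (tBS_rel m r) (subst f_gen w) (tbs_word (fst (f_syllables w)) (snd (f_syllables w))).
Proof.
  induction w as [|[x b] w IH]; [reflexivity|].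
  change (subst f_gen ((x, b) :: w)) with ((if b then inv_word (f_gen x) else f_gen x) ++ subst f_gen w).
  rewrite IH. cbn [f_syllables]. destruct (f_syllables w) as [p L]. destruct x; cbn [fst snd].
  - destruct b; reflexivity.
  - unfold tbs_word. rewrite app_assoc, <- evec_vadd. destruct b; reflexivity.
Qed.

Lemma f_syllables_bs m q s w :
  weq (BS_rel m q) w (bs_word (psi q s (fst (f_syllables w))) (psi_list q s (snd (f_syllables w)))).
Proof.
  induction w as [|[x b] w IH]; [reflexivity|].
  change ((x, b) :: w) with ([(x, b)] ++ w) at 1. rewrite IH at 1.
  cbn [f_syllables]. destruct (f_syllables w) as [p L]. destruct x; cbn [fst snd]; [reflexivity|].
  unfold bs_word. rewrite app_assoc. unfold psi. rewrite psi_from_vadd, <- wpow_add.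
  destruct b; reflexivity.
Qed.

Lemma f_syllables_vbound w :
  vbound 1 (fst (f_syllables w)) (snd (f_syllables w)) /\ (length (snd (f_syllables w)) <= length w)%nat.
Proof.
  induction w as [|[x b] w IH]; [split; [split; simpl; auto | simpl; lia]|].
  cbn [f_syllables]. destruct (f_syllables w) as [p L]. simpl in *.
  destruct IH as [[H1 H2] H3]. destruct x.
  - split; [split|]; simpl; auto. lia.
  - split; [split|]; simpl; auto; try lia. destruct p as [|c [|d p]]; simpl in *; lia.
Qed.

Lemma bword_bpow m q r H : rs_recursion m q r (sq m q r) H -> forall k, (k <= H)%nat ->
  weq (BS_rel m q) (bword m r k) (bpow (eexp q (sq m q r) k)).
Proof.
  intros [_ Hs] k. induction k as [|[|j] IH]; intros Hk.
  - simpl. rewrite wpow_1. reflexivity.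
  - pose proof (conj_a_bpow_mul m q 1) as E. rewrite !Z.mul_1_r in E.
    simpl eexp. rewrite Z.mul_1_r. exact E.
  - assert (E : bword m r (S (S j)) = conj (gen ga) (bword m r (S j) ++ bpow (- r (S j))))
      by (unfold conj; rewrite <- app_assoc; reflexivity).
    rewrite E, IH, wpow_add by lia. simpl eexp.
    replace (q * sq m q r j + - r (S j)) with (m * sq m q r (S j)) by (rewrite Hs by lia; ring).
    apply conj_a_bpow_mul.
Qed.

Section Homomorphisms.
Variables (m : Z) (xi : nat -> Z) (r : nat -> Z) (s : nat -> nat -> Z) (xis : nat -> Z).
Hypotheses (hm : m <> 0) (hrs : rs_spec m xi r s) (hconv : zm_conv m xis xi).

Lemma g_gen_relator_trivial w : tBS_rel m r w ->
  exists n0, forall n, (n0 <= n)%nat -> weq (BS_rel m (xis n)) (subst (g_gen m r) w) [].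
Proof.
  intros [[i [j ->]] | [-> | [i [Hi ->]]]]; rewrite !subst_app, !subst_inv_word, ?subst_wpow, !subst_gen.
  - destruct (rs_recursion_sq_eventually m xi r s xis (S (Nat.max i j)) hm hrs hconv) as [n0 Hn0].
    exists n0. intros n Hn. specialize (Hn0 n Hn). simpl g_gen.
    rewrite !(bword_bpow m (xis n) r (S (Nat.max i j)) Hn0) by lia.
    rewrite <- !wpow_opp, !wpow_add.
    match goal with |- weq _ (wpow _ ?k) _ => replace k with 0 by ring end. reflexivity.
  - exists O. intros n _.
    transitivity (g_gen m r (tE 1) ++ inv_word (g_gen m r (tE 1))); [|apply weq_app_inv_r].
    cbn [g_gen bword]. rewrite <- !app_assoc. reflexivity.
  - exists O. intros n _. destruct i as [|j]; [lia|].
    transitivity (g_gen m r (tE (S (S j))) ++ inv_word (g_gen m r (tE (S (S j)))));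
      [|apply weq_app_inv_r].
    cbn [g_gen bword]. rewrite <- !app_assoc. reflexivity.
Qed.

Lemma g_gen_weq_eventually u v : weq (tBS_rel m r) u v ->
  exists n0, forall n, (n0 <= n)%nat ->
    weq (BS_rel m (xis n)) (subst (g_gen m r) u) (subst (g_gen m r) v).
Proof.
  intro H. induction H.
  - exists O; intros; reflexivity.
  - destruct IHweq as [n0 Hn0]. exists n0; intros; symmetry; auto.
  - destruct IHweq1 as [n1 H1], IHweq2 as [n2 H2]. exists (Nat.max n1 n2). intros n Hn.
    rewrite (H1 n), (H2 n) by lia. reflexivity.
  - destruct IHweq1 as [n1 H1], IHweq2 as [n2 H2]. exists (Nat.max n1 n2). intros n Hn.
    rewrite !subst_app, (H1 n), (H2 n) by lia. reflexivity.
  - exists O. intros n _. change [x; inv_letter x] with ([x] ++ inv_word [x]).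
    rewrite subst_app, subst_inv_word. apply weq_app_inv_r.
  - apply g_gen_relator_trivial; auto.
Qed.

End Homomorphisms.

Lemma g_f_id m r w : subst (g_gen m r) (subst f_gen w) = w.
Proof.
  induction w as [|[x b] w IH]; auto.
  change (subst f_gen ((x, b) :: w)) with ((if b then inv_word (f_gen x) else f_gen x) ++ subst f_gen w).
  rewrite subst_app, IH. destruct x, b; reflexivity.
Qed.

Lemma f_bword m r i : weq (tBS_rel m r) (subst f_gen (bword m r i)) (ew i).
Proof.
  induction i as [|[|j] IH].
  - reflexivity.
  - change (bword m r 1) with (gen ga ++ bpow m ++ inv_word (gen ga)).
    rewrite !subst_app, subst_inv_word, subst_wpow, !subst_gen. apply conj_a_e0_pow_m.
  - change (bword m r (S (S j))) with
      (gen ga ++ bword m r (S j) ++ bpow (- r (S j)) ++ inv_word (gen ga)).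
    rewrite !subst_app, subst_inv_word, subst_wpow, !subst_gen, IH.
    rewrite <- (conj_a_ew_shift m r (S j)) by lia. unfold conj, aw, ew. rewrite <- !app_assoc.
    reflexivity.
Qed.

Lemma f_g_weq m r w : weq (tBS_rel m r) (subst f_gen (subst (g_gen m r) w)) w.
Proof.
  induction w as [|[x b] w IH]; [reflexivity|].
  change (subst (g_gen m r) ((x, b) :: w)) with
    ((if b then inv_word (g_gen m r x) else g_gen m r x) ++ subst (g_gen m r) w).
  rewrite subst_app, IH. change ((x, b) :: w) with ([(x, b)] ++ w). f_equiv.
  destruct x as [|i], b; simpl g_gen; rewrite ?subst_inv_word, ?f_bword; reflexivity.
Qed.

Lemma evec_zero off v : Forall (fun c => c = 0) v -> evec off v = [].
Proof. revert off; induction v; intros off H; simpl; auto. inversion H; subst. rewrite IHv; auto. Qed.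

Lemma entries_bounded (v : list Z) : exists C, 0 <= C /\ Forall (fun c => Z.abs c <= C) v.
Proof.
  induction v as [|c v IH]; [exists 0; split; auto; lia|].
  destruct IH as [C [HC Hv]]. exists (Z.abs c + C). split; [lia|]. constructor; [lia|].
  eapply Forall_impl; [|exact Hv]. intros; simpl in *; lia.
Qed.

Definition entries_le (C : Z) (p : list Z) (L : list (bool * list Z)) : Prop :=
  Forall (fun c => Z.abs c <= C) p /\ Forall (fun x => Forall (fun c => Z.abs c <= C) (snd x)) L.

Lemma entries_le_exists p L : exists C, 0 <= C /\ entries_le C p L.
Proof.
  assert (Hmono : forall C C' v, C <= C' -> Forall (fun c => Z.abs c <= C) v ->
    Forall (fun c => Z.abs c <= C') v).
  { intros C C' v HC Hv. eapply Forall_impl; [|exact Hv]. intros; simpl in *; lia. }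
  induction L as [|[e v] L IH].
  - destruct (entries_bounded p) as [C [HC Hp]]. exists C. split; [auto | split; auto].
  - destruct IH as [C [HC [Hp HL]]]. destruct (entries_bounded v) as [C' [HC' Hv]].
    exists (C + C'). split; [lia|].
    split; [apply (Hmono C); auto; lia|]. constructor; [apply (Hmono C'); auto; lia|].
    eapply Forall_impl; [|exact HL]. intros x Hx. apply (Hmono C); auto. lia.
Qed.

(* Britton's lemma rules out a-letters, and the injectivity of psi on small
   vectors kills the remaining vector. *)
Lemma tbs_word_nil_of_bs_trivial m q r s H C p L : m <> 0 -> q <> 0 ->
  rs_recursion m q r s H -> (forall i, 0 <= r (S i) < Z.abs m) ->
  tbs_pinch_free m r L -> vbound (S H) p L -> 0 <= C -> entries_le C p L ->
  growth_bound (Z.abs m) H C < Z.abs q ->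
  weq (BS_rel m q) (bs_word (psi q s p) (psi_list q s L)) [] -> tbs_word p L = [].
Proof.
  intros Hm Hq Hex Hr Hpf [Hp HL] HC [HCp HCL] Hg Htriv.
  pose proof (growth_bound_ge (Z.abs m) H C HC ltac:(lia)) as HgC.
  destruct L as [|x L'].
  - unfold bs_word in Htriv. simpl in Htriv. rewrite app_nil_r in Htriv.
    apply bpow_trivial in Htriv; auto.
    unfold tbs_word. simpl. rewrite app_nil_r. apply evec_zero.
    apply (psi_eq_0_small m q r s H) with (n := H) (C := C); auto.
  - exfalso. apply (bs_word_nontrivial m q Hm Hq (psi q s p) (psi_list q s (x :: L')));
      [discriminate | | exact Htriv].
    apply (psi_list_pinch_free m q r s H Hm Hex); auto.
    eapply Forall_impl; [|exact HCL]. intros y Hy. simpl in Hy.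
    pose proof (hd0_abs_bound C (snd y) HC Hy). lia.
Qed.

Lemma marked_conv_eventually Ns N w : marked_conv Ns N ->
  (exists n0, forall n, (n0 <= n)%nat -> Ns n w) -> N w.
Proof.
  intros HN [n0 Hn0]. destruct (HN (length w)) as [n1 Hn1].
  apply (Hn1 (Nat.max n0 n1)); [lia | lia | apply Hn0; lia].
Qed.

Section LimitGroup.
Variables (m : Z) (xi : nat -> Z) (r : nat -> Z) (s : nat -> nat -> Z) (xis : nat -> Z).
Variable N : word gen2 -> Prop.
Hypotheses (hm : m <> 0) (hrs : rs_spec m xi r s) (hxis0 : forall n, xis n <> 0)
  (hinf : tends_to_infty xis) (hconv : zm_conv m xis xi)
  (hN : marked_conv (fun n => BS_ker m (xis n)) N).

Lemma g_gen_respects_kernels w : tBS_ker m r w -> N (subst (g_gen m r) w).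
Proof.
  intro Hw. apply (marked_conv_eventually _ _ _ hN).
  exact (g_gen_weq_eventually m xi r s xis hm hrs hconv w [] Hw).
Qed.

Lemma f_gen_respects_kernels w : N w -> tBS_ker m r (subst f_gen w).
Proof.
  intro Hw. assert (Hr : forall i, 0 <= r (S i) < Z.abs m) by (intro i; apply hrs).
  destruct (f_syllables_vbound w) as [HB0 HL0].
  set (H := length w).
  pose proof (reduce_weq m r hm H (fst (f_syllables w)) (snd (f_syllables w))) as Hred.
  pose proof (reduce_pinch_free m r H (fst (f_syllables w)) (snd (f_syllables w)) HL0) as Hpf.
  pose proof (reduce_vbound m r H 1 _ _ HB0 (le_n 1)) as HB.
  destruct (reduce m r H (fst (f_syllables w)) (snd (f_syllables w))) as [p L] eqn:Ered.
  simpl fst in *; simpl snd in *.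
  destruct (entries_le_exists p L) as [C [HC HCpL]].
  destruct (hN H) as [n1 Hn1].
  destruct (hinf (growth_bound (Z.abs m) H C + 1)) as [n2 Hn2].
  destruct (rs_recursion_sq_eventually m xi r s xis H hm hrs hconv) as [n3 Hn3].
  set (q := xis (Nat.max n1 (Nat.max n2 n3))).
  assert (Hq0 : q <> 0) by apply hxis0.
  assert (Hex : rs_recursion m q r (sq m q r) H) by (apply Hn3; lia).
  assert (Hw' : weq (BS_rel m q) w []) by (apply (Hn1 (Nat.max n1 (Nat.max n2 n3))); auto; lia).
  pose proof (reduce_bs m q r (sq m q r) H hm Hex H 1 _ _ HB0 (le_n 1) ltac:(lia)) as Hbs.
  rewrite Ered in Hbs. simpl fst in Hbs; simpl snd in Hbs.
  assert (HBS : vbound (S H) p L) by (apply (vbound_mono (1 + H)); auto).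
  assert (Hgq : growth_bound (Z.abs m) H C < Z.abs q)
    by (pose proof (Hn2 (Nat.max n1 (Nat.max n2 n3)) ltac:(lia)); lia).
  assert (Htriv : weq (BS_rel m q) (bs_word (psi q (sq m q r) p) (psi_list q (sq m q r) L)) [])
    by (rewrite <- Hbs, <- f_syllables_bs; exact Hw').
  unfold tBS_ker, pres_ker. rewrite f_syllables_tbs, Hred.
  rewrite (tbs_word_nil_of_bs_trivial m q r (sq m q r) H C p L); auto. reflexivity.
Qed.

End LimitGroup.

Theorem corollary2p9 (m : Z) (hm : m <> 0)
  (xi : nat -> Z) (hxi : zm_elem m xi)
  (r : nat -> Z) (s : nat -> nat -> Z) (hrs : rs_spec m xi r s)
  (xis : nat -> Z) (hxis0 : forall n, xis n <> 0)
  (hinf : tends_to_infty xis) (hconv : zm_conv m xis xi)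
  (N : word gen2 -> Prop)
  (hN : marked_conv (fun n => BS_ker m (xis n)) N) :
  inverse_isos N (tBS_ker m r) f_gen (g_gen m r).
Proof.
  split; [|split; [|split]]; intro w.
  - exact (f_gen_respects_kernels m xi r s xis N hm hrs hxis0 hinf hconv hN w).
  - exact (g_gen_respects_kernels m xi r s xis N hm hrs hconv hN w).
  - rewrite g_f_id. apply (marked_conv_eventually _ _ _ hN).
    exists O. intros. apply weq_app_inv_r.
  - unfold tBS_ker, pres_ker. rewrite f_g_weq. apply weq_app_inv_r.
Qed.
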